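(* Let $\nu,\beta>0$, $\rho>1$, $n\ge1$, and let $X,X_1,\ldots,X_n$ be i.i.d. $\mathrm{Pareto}(\nu,\beta)$. Let $J_n\coloneqq\log_\rho X_{(n)}$ where $X_{(n)}=\max_iX_i$, and define \[p_{\mathrm{last}}\coloneqq\Pr\left(\rho^{\lceil J_n\rceil-1}<X\le\rho^{\lceil J_n\rceil}\right),\qquad p_{\mathrm{tail}}\coloneqq\Pr\left(X>\rho^{\lceil J_n\rceil}\right)\] (probabilities taken jointly over $X$ and $X_1,\ldots,X_n$). Then \[p_{\mathrm{last}}\le\frac{\rho^\beta-\rho^{-\beta}}{n+1}\qquad\text{and}\qquad\frac{\rho^{-\beta}}{n+1}\le p_{\mathrm{tail}}\le\frac{1}{n+1}.\]
   Context: $\mathrm{Pareto}(\nu,\beta)$ has CDF $1-(\nu/x)^\beta$ for $x>\nu$. *)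

From HB Require Import structures.
From mathcomp Require Import all_boot all_order all_algebra.
From mathcomp Require Import all_classical all_reals all_analysis.
Set Implicit Arguments. Unset Strict Implicit. Unset Printing Implicit Defensive.
Import Order.TTheory GRing.Theory Num.Theory.
Local Open Scope classical_set_scope.
Local Open Scope ring_scope.

Definition is_pareto {R : realType} {d : measure_display} {T : measurableType d}
  (P : probability T R) (nu beta : R) (Y : T -> R) : Prop :=
  measurable_fun setT Y /\
  forall x : R, P [set t | Y t <= x] =
    (if nu < x then 1 - (nu / x) `^ beta else 0)%:E.

(* Mutual independence of a finite family of real random variables:
   product rule for every choice of Borel sets (taking B i = setT
   recovers every subfamily). *)
Definition mutually_independent {R : realType} {d : measure_display}
  {T : measurableType d} (P : probability T R) (k : nat)
  (Xs : 'I_k -> T -> R) : Prop :=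
  (forall i, measurable_fun setT (Xs i)) /\
  forall B : 'I_k -> set R, (forall i, measurable (B i)) ->
    P (\bigcap_(i in [set: 'I_k]) (Xs i @^-1` B i)) =
    (\prod_(i < k) P (Xs i @^-1` B i))%E.

(* Sample maximum X_(n) = max_{1<=i<=n} X_i, where the family Xs is indexed by
   'I_n.+1, index 0 being the extra copy X and index lift ord0 i being X_(i+1).
   (Initial value 0 is harmless: Pareto variables are > nu > 0.) *)
Definition sample_max {R : realType} {T : Type} (n : nat)
  (Xs : 'I_n.+1 -> T -> R) (t : T) : R :=
  \big[Num.max/0]_(i < n) Xs (lift ord0 i) t.

Definition Jn {R : realType} {T : Type} (n : nat) (rho : R)
  (Xs : 'I_n.+1 -> T -> R) (t : T) : R :=
  ln (sample_max Xs t) / ln rho.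

Definition cJ {R : realType} {T : Type} (n : nat) (rho : R)
  (Xs : 'I_n.+1 -> T -> R) (t : T) : int :=
  Num.ceil (Jn rho Xs t).

Definition last_event {R : realType} {T : Type} (n : nat) (rho : R)
  (Xs : 'I_n.+1 -> T -> R) : set T :=
  [set t | rho `^ ((cJ rho Xs t)%:~R - 1) < Xs ord0 t <=
           rho `^ (cJ rho Xs t)%:~R].

Definition tail_event {R : realType} {T : Type} (n : nat) (rho : R)
  (Xs : 'I_n.+1 -> T -> R) : set T :=
  [set t | rho `^ (cJ rho Xs t)%:~R < Xs ord0 t].

(* Cut the range of the sample maximum M at the powers rho^k.  On the layer
   rho^(k-1) < M <= rho^k we have ceil J_n = k, so there both events are
   events about X alone, and independence gives
   P(E, layer k) = P(X in S_k) (u_k^n - u_(k-1)^n) with u_k = F(rho^k).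
   Summing over k yields Riemann-Stieltjes sums of the integral of (1 - t)
   against d(t^n) over [0, 1], which equals 1/(n+1); the Pareto tail satisfies
   1 - u_(k-1) <= rho^beta (1 - u_k), so evaluating the integrand at either end
   of a step changes the sums by a factor rho^(+-beta) at most.  Truncating
   at a finite level L costs P(M > rho^L) <= n (1 - u_L), which vanishes. *)

From HB Require Import structures.
From mathcomp Require Import all_boot all_order all_algebra.
From mathcomp Require Import all_classical all_reals all_analysis.
From mathcomp Require Import ring lra.
Import Order.TTheory GRing.Theory Num.Theory.
Set Implicit Arguments. Unset Strict Implicit. Unset Printing Implicit Defensive.
Local Open Scope classical_set_scope.
Local Open Scope ring_scope.

Section real_probability.
Context d (T : measurableType d) (R : realType) (P : probability T R).

Definition pr (A : set T) : R := fine (P A).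

Lemma prE A : measurable A -> P A = (pr A)%:E.
Proof.
move=> mA; rewrite /pr fineK // ge0_fin_numE ?measure_ge0 //.
exact: le_lt_trans (probability_le1 P mA) (ltey _).
Qed.

Lemma pr_ge0 A : 0 <= pr A.
Proof. exact/fine_ge0/measure_ge0. Qed.

Lemma le_pr A B : measurable A -> measurable B -> A `<=` B -> pr A <= pr B.
Proof.
by move=> mA mB AB; rewrite -lee_fin -!prE //; apply: le_measure; rewrite ?inE.
Qed.

Lemma pr_setC A : measurable A -> pr (~` A) = 1 - pr A.
Proof.
move=> mA; apply/eqP; rewrite -eqe EFinB -!prE ?probability_setC //.
exact: measurableC.
Qed.

Lemma pr_setD A B : measurable A -> measurable B -> B `<=` A ->
  pr (A `\` B) = pr A - pr B.
Proof.
move=> mA mB BA; apply/eqP; rewrite -eqe EFinB -!prE ?measureD ?(setIidr BA) //.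
- exact: le_lt_trans (probability_le1 P mA) (ltey _).
- exact: measurableD.
Qed.

End real_probability.

Section real_level_sets.
Context d (T : measurableType d) (R : realType).
Implicit Types f g : T -> R.

Lemma measurable_ltr f g : measurable_fun setT f -> measurable_fun setT g ->
  measurable [set t | f t < g t].
Proof.
move=> mf mg; rewrite -[X in measurable X]setTI.
exact: measurable_realfun.measurable_fun_ltr.
Qed.

Lemma measurable_ler f g : measurable_fun setT f -> measurable_fun setT g ->
  measurable [set t | f t <= g t].
Proof.
move=> mf mg; rewrite -[X in measurable X]setTI.
exact: measurable_realfun.measurable_fun_ler.
Qed.

Lemma set_lt_leE (U : Type) (h : U -> R) x y :
  [set z | x < h z <= y] = [set z | h z <= y] `\` [set z | h z <= x].
Proof.
apply/seteqP; split => z /=; first by case/andP=> xz ->; rewrite leNgt xz.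
by case=> -> /negP; rewrite -ltNge => ->.
Qed.

Lemma measurable_le_cst (x : R) : measurable [set y : R | y <= x].
Proof. by rewrite -set_itvNyc; exact: measurable_itv. Qed.

Lemma measurable_cst_lt (x : R) : measurable [set y : R | x < y].
Proof. by rewrite -set_itvoy; exact: measurable_itv. Qed.

Lemma measurable_itvoc_set (x y : R) : measurable [set z : R | x < z <= y].
Proof. by rewrite -set_itvoc; exact: measurable_itv. Qed.

End real_level_sets.

Section power_inequalities.
Context (R : realFieldType) (n : nat).
Implicit Types a b v x y : R.

Lemma weighted_AGM_exp x y : 0 <= x -> 0 <= y ->
  n.+1%:R * x ^+ n * y <= y ^+ n.+1 + n%:R * x ^+ n.+1.
Proof.
move=> x0 y0; elim: n => [|m IH]; first by rewrite expr0 expr1 mulr1 mul1r mul0r addr0.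
have sq : 0 <= m.+1%:R * x ^+ m * (x - y) ^+ 2.
  by rewrite mulr_ge0 ?sqr_ge0 // mulr_ge0 // exprn_ge0.
rewrite -subr_ge0 (_ : _ - _ = y * (y ^+ m.+1 + m%:R * x ^+ m.+1
  - m.+1%:R * x ^+ m * y) + m.+1%:R * x ^+ m * (x - y) ^+ 2); last first.
  by rewrite !exprS !mulrS; ring.
by rewrite addr_ge0 // mulr_ge0 // subr_ge0.
Qed.

Lemma one_subX_le m v : 0 <= v <= 1 -> 1 - v ^+ m <= m%:R * (1 - v).
Proof.
case/andP=> v0 v1; elim: m => [|m IH]; first by rewrite expr0 subrr mul0r.
have := exprn_ile1 m v0 v1; have := exprn_ge0 m v0.
by rewrite exprS mulrS; nra.
Qed.

(* The integral of [1 - t] against [d(t^n)] over [[0, v]]; the sums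
   [\sum_j (1 - t_j) (v_j.+1^n - v_j^n)], [t_j] in [[v_j, v_j.+1]], below are
   its Riemann-Stieltjes sums. *)
Definition tail_integral v := v ^+ n - n%:R / n.+1%:R * v ^+ n.+1.

Lemma tail_integral0 : (0 < n)%N -> tail_integral 0 = 0.
Proof. by rewrite /tail_integral !expr0n; case: n => //= m _; rewrite mulr0 subr0. Qed.

Lemma tail_integral1 : tail_integral 1 = 1 / n.+1%:R.
Proof.
rewrite /tail_integral !expr1n mulr1 mulrS; field.
by rewrite -mulrS pnatr_eq0.
Qed.

Lemma tail_integral_increment_ge a b : 0 <= a -> 0 <= b ->
  (b ^+ n - a ^+ n) * (1 - b) <= tail_integral b - tail_integral a.
Proof.
move=> a0 b0; rewrite -subr_ge0 (_ : _ - _ =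
  (b ^+ n.+1 + n%:R * a ^+ n.+1 - n.+1%:R * a ^+ n * b) / n.+1%:R).
  by rewrite divr_ge0 // subr_ge0 weighted_AGM_exp.
by rewrite /tail_integral !exprS; field; rewrite -mulrS pnatr_eq0.
Qed.

Lemma tail_integral_increment_le a b : 0 <= a -> 0 <= b ->
  tail_integral b - tail_integral a <= (b ^+ n - a ^+ n) * (1 - a).
Proof.
move=> a0 b0; rewrite -subr_ge0 (_ : _ - _ =
  (a ^+ n.+1 + n%:R * b ^+ n.+1 - n.+1%:R * b ^+ n * a) / n.+1%:R).
  by rewrite divr_ge0 // subr_ge0 weighted_AGM_exp.
by rewrite /tail_integral !exprS; field; rewrite -mulrS pnatr_eq0.
Qed.

Lemma tail_integral_le v : 0 <= v -> tail_integral v <= 1 / n.+1%:R.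
Proof.
move=> v0; have := tail_integral_increment_ge v0 ler01.
by rewrite subrr mulr0 tail_integral1 subr_ge0.
Qed.

Lemma tail_integral_ge v : 0 <= v <= 1 -> 1 / n.+1%:R - (1 - v) <= tail_integral v.
Proof.
case/andP=> v0 v1; have := tail_integral_increment_le v0 ler01.
rewrite tail_integral1 expr1n.
have : (1 - v ^+ n) * (1 - v) <= 1 - v.
  by rewrite ler_piMl ?subr_ge0 // lerBlDr lerDl exprn_ge0.
set q := 1 / _; lra.
Qed.

Lemma tail_integral_add_one_subX_le v : 0 <= v <= 1 ->
  tail_integral v + (1 - v ^+ n) <= 1 / n.+1%:R + n%:R * (1 - v).
Proof.
move=> v01; have bernoulli := one_subX_le n.+1 v01.
rewrite -subr_ge0 (_ : _ - _ = n%:R / n.+1%:R * (n.+1%:R * (1 - v) - (1 - v ^+ n.+1))).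
  by rewrite mulr_ge0 ?divr_ge0 // subr_ge0.
by rewrite /tail_integral !exprS; field; rewrite -mulrS pnatr_eq0.
Qed.

End power_inequalities.

Section increment_sums.
Context (R : realFieldType) (n : nat) (w : R) (v : nat -> R).
Hypotheses (n_gt0 : (0 < n)%N) (w_ge1 : 1 <= w) (v0 : v 0%N = 0)
  (v_in01 : forall j, 0 <= v j <= 1) (v_mono : forall j, v j <= v j.+1)
  (v_ratio : forall j, 1 - v j <= w * (1 - v j.+1)).

Let v_ge0 j : 0 <= v j. Proof. by case/andP: (v_in01 j). Qed.

Let w_gt0 : 0 < w. Proof. exact: lt_le_trans ltr01 w_ge1. Qed.

Let winv_le1 : w^-1 <= 1. Proof. by rewrite invr_le1 // unitfE gt_eqF. Qed.

Lemma sum_tail_integral_increments L :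
  \sum_(j < L) (tail_integral n (v j.+1) - tail_integral n (v j)) =
  tail_integral n (v L).
Proof.
rewrite -(big_mkord xpredT (fun j => tail_integral n (v j.+1) - tail_integral n (v j))).
by rewrite telescope_sumr // v0 tail_integral0 // subr0.
Qed.

Lemma expX_increment_ge0 j : 0 <= v j.+1 ^+ n - v j ^+ n.
Proof. by rewrite subr_ge0 lerXn2r ?nnegrE. Qed.

Lemma sum_tail_increments_le L :
  \sum_(j < L) (1 - v j.+1) * (v j.+1 ^+ n - v j ^+ n) + (1 - v L ^+ n)
  <= 1 / n.+1%:R + n%:R * (1 - v L).
Proof.
apply: le_trans (tail_integral_add_one_subX_le _ (v_in01 L)); rewrite lerD2r.
rewrite -sum_tail_integral_increments; apply: ler_sum => j _.
by rewrite mulrC tail_integral_increment_ge.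
Qed.

Lemma sum_tail_increments_ge L : w^-1 / n.+1%:R <=
  \sum_(j < L) (1 - v j.+1) * (v j.+1 ^+ n - v j ^+ n) + n%:R * (1 - v L).
Proof.
have integral_le_sum : w^-1 * tail_integral n (v L) <=
    \sum_(j < L) (1 - v j.+1) * (v j.+1 ^+ n - v j ^+ n).
  rewrite -sum_tail_integral_increments mulr_sumr; apply: ler_sum => j _.
  rewrite ler_pdivrMl // mulrC.
  apply: le_trans (tail_integral_increment_le _ _ _) _ => //.
  by rewrite [(1 - _) * _]mulrC -mulrA ler_wpM2l ?expX_increment_ge0 // mulrC.
apply: le_trans (lerD integral_le_sum (lexx _)).
have winv_ge0 : 0 <= w^-1 by rewrite invr_ge0 ltW.
have := ler_wpM2l winv_ge0 (tail_integral_ge n (v_in01 L)); rewrite div1r mulrBr.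
have : w^-1 * (1 - v L) <= n%:R * (1 - v L).
  have /andP[_ vL_le1] := v_in01 L.
  by rewrite ler_wpM2r ?subr_ge0 // (le_trans winv_le1) ?ler1n.
set a := w^-1; set q := n.+1%:R^-1; set b := a * (1 - v L); lra.
Qed.

Lemma sum_last_increments_le L :
  \sum_(j < L) (v j.+1 - v j) * (v j.+1 ^+ n - v j ^+ n) + (1 - v L ^+ n)
  <= (w - w^-1) / n.+1%:R + n%:R * (1 - v L).
Proof.
have sum_le : \sum_(j < L) (v j.+1 - v j) * (v j.+1 ^+ n - v j ^+ n)
    <= (w - 1) * tail_integral n (v L).
  rewrite -sum_tail_integral_increments mulr_sumr; apply: ler_sum => j _.
  have step : v j.+1 - v j <= (w - 1) * (1 - v j.+1) by have := v_ratio j; lra.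
  apply: le_trans (ler_wpM2r (expX_increment_ge0 j) step) _.
  by rewrite -mulrA ler_wpM2l ?subr_ge0 // mulrC tail_integral_increment_ge.
apply: lerD (one_subX_le n (v_in01 L)); apply: le_trans sum_le _.
apply: le_trans (ler_wpM2l _ (tail_integral_le n (v_ge0 L))) _.
  by rewrite subr_ge0.
by rewrite mul1r ler_wpM2r ?invr_ge0 // lerD2l lerN2.
Qed.

End increment_sums.

Section pareto_cdf.
Context (R : realType) (nu beta : R).
Hypotheses (nu_gt0 : 0 < nu) (beta_gt0 : 0 < beta).

Definition pareto_cdf (x : R) : R := if nu < x then 1 - (nu / x) `^ beta else 0.

Lemma pareto_cdf_le_nu x : x <= nu -> pareto_cdf x = 0.
Proof. by rewrite /pareto_cdf ltNge => ->. Qed.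

Lemma pareto_ccdf_gt_nu x : nu < x -> 1 - pareto_cdf x = (nu / x) `^ beta.
Proof. by rewrite /pareto_cdf => ->; rewrite opprB addrC subrK. Qed.

Lemma powR_ge1 r : 1 <= r -> 1 <= r `^ beta.
Proof.
by move=> r1; have := ler_powR r1 (ltW beta_gt0); rewrite powRr0.
Qed.

Lemma powR_le1 r : 0 <= r <= 1 -> r `^ beta <= 1.
Proof.
case/andP=> r0 r1.
by have := ge0_ler_powR (ltW beta_gt0) r0 ler01 r1; rewrite powR1.
Qed.

Lemma pareto_cdf_ge0 x : 0 <= pareto_cdf x.
Proof.
rewrite /pareto_cdf; case: ifPn => // nu_x; have x_gt0 := lt_trans nu_gt0 nu_x.
have nu_x1 : nu / x <= 1 by rewrite ler_pdivrMr // mul1r ltW.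
by rewrite subr_ge0 powR_le1 // nu_x1 divr_ge0 // ltW.
Qed.

Lemma pareto_cdf_le1 x : pareto_cdf x <= 1.
Proof. by rewrite /pareto_cdf; case: ifP => // _; rewrite lerBlDr lerDl powR_ge0. Qed.

Lemma le_pareto_cdf : {homo pareto_cdf : x y / x <= y}.
Proof.
move=> x y xy; case: (leP x nu) => [x_nu|nu_x].
  by rewrite pareto_cdf_le_nu ?pareto_cdf_ge0.
have x_gt0 := lt_trans nu_gt0 nu_x; have nu_y := lt_le_trans nu_x xy.
have y_gt0 := lt_trans nu_gt0 nu_y.
rewrite -lerN2 -(lerD2l 1) !pareto_ccdf_gt_nu // ge0_ler_powR ?(ltW beta_gt0) //.
- by rewrite nnegrE divr_ge0 // ltW.
- by rewrite nnegrE divr_ge0 // ltW.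
by rewrite ler_pM2l // lef_pV2.
Qed.

Lemma pareto_ccdf_div_le r x : 1 <= r -> 0 < x ->
  1 - pareto_cdf (x / r) <= r `^ beta * (1 - pareto_cdf x).
Proof.
move=> r1 x_gt0; have r_gt0 := lt_le_trans ltr01 r1; have r_ge0 := ltW r_gt0.
have nu_rx : (nu / (x / r)) `^ beta = r `^ beta * (nu / x) `^ beta.
  by rewrite -powRM // ?divr_ge0 ?(ltW nu_gt0) ?(ltW x_gt0) // invf_div mulrCA.
case: (ltP nu (x / r)) => [nu_xr|xr_nu].
  have nu_x : nu < x.
    by apply: lt_le_trans nu_xr _; rewrite ler_pdivrMr // ler_peMr // ltW.
  by rewrite !pareto_ccdf_gt_nu // nu_rx.
rewrite pareto_cdf_le_nu // subr0; case: (ltP nu x) => [nu_x|x_nu].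
  rewrite pareto_ccdf_gt_nu // -nu_rx powR_ge1 //.
  by rewrite ler_pdivlMr ?divr_gt0 // mul1r.
by rewrite pareto_cdf_le_nu // subr0 mulr1 powR_ge1.
Qed.

Lemma pareto_ccdf_small e :
  0 < e -> exists2 y, 0 < y & forall x, y <= x -> 1 - pareto_cdf x <= e.
Proof.
move=> e_gt0; set th := e `^ beta^-1; have th_gt0 : 0 < th by exact: powR_gt0.
exists (nu / th + nu) => [|x yx]; first by rewrite addr_gt0 ?divr_gt0.
have nu_x : nu < x by apply: lt_le_trans yx; rewrite ltrDr divr_gt0.
have x_gt0 := lt_trans nu_gt0 nu_x.
have -> : e = th `^ beta by rewrite -powRrM mulVf ?gt_eqF // powRr1 // ltW.
rewrite pareto_ccdf_gt_nu // ge0_ler_powR ?(ltW beta_gt0) ?nnegrE ?(ltW th_gt0) //.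
  by rewrite divr_ge0 // ltW.
rewrite ler_pdivrMr // -ler_pdivrMl //; apply: le_trans yx.
by rewrite mulrC lerDl ltW.
Qed.

End pareto_cdf.

Section rho_powers.
Context (R : realType) (rho : R).
Hypothesis rho_gt1 : 1 < rho.

Definition rho_pow (k : int) : R := rho `^ k%:~R.

Let rho_gt0 : 0 < rho := lt_trans ltr01 rho_gt1.
Let ln_rho_gt0 : 0 < ln rho := ln_gt0 rho_gt1.

Lemma rho_pow_gt0 k : 0 < rho_pow k.
Proof. exact: powR_gt0. Qed.

Lemma ln_rho_pow k : ln (rho_pow k) = k%:~R * ln rho.
Proof. exact: ln_powR. Qed.

Lemma ler_rho_pow : {homo rho_pow : k l / (k <= l)%R}.
Proof.
move=> k l kl; rewrite -ler_ln ?posrE ?rho_pow_gt0 // !ln_rho_pow.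
by rewrite ler_wpM2r ?ler_int // ltW.
Qed.

Lemma rho_powB1 k : rho_pow (k - 1) = rho_pow k / rho.
Proof.
rewrite /rho_pow intrB powRB ?powRr1 ?(ltW rho_gt0) //.
by rewrite implybE (gt_eqF rho_gt0) orbT.
Qed.

Lemma powR_intr_sub1 k : rho `^ (k%:~R - 1) = rho_pow (k - 1).
Proof. by rewrite /rho_pow intrB. Qed.

Lemma ceil_log_rho y k : rho_pow (k - 1) < y <= rho_pow k ->
  Num.ceil (ln y / ln rho) = k.
Proof.
case/andP=> lt_y y_le; have y_gt0 := lt_trans (rho_pow_gt0 _) lt_y.
apply: ceil_def; rewrite ltr_pdivlMr // ler_pdivrMr // -!ln_rho_pow.
by rewrite ltr_ln ?ler_ln ?posrE ?rho_pow_gt0 // lt_y y_le.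
Qed.

Lemma exists_rho_pow_le y : 0 < y -> exists k, rho_pow k <= y.
Proof.
move=> y_gt0; exists (Num.floor (ln y / ln rho)).
rewrite -ler_ln ?posrE ?rho_pow_gt0 // ln_rho_pow -ler_pdivlMr //.
exact: floor_le.
Qed.

Lemma exists_rho_pow_ge y : 0 < y -> exists k, y <= rho_pow k.
Proof.
move=> y_gt0; exists (Num.ceil (ln y / ln rho)).
rewrite -ler_ln ?posrE ?rho_pow_gt0 // ln_rho_pow -ler_pdivrMr //.
exact: ceil_ge.
Qed.

End rho_powers.

Section pareto_sample.
Context (R : realType) d (T : measurableType d) (P : probability T R) (n : nat)
  (nu beta rho : R) (Xs : 'I_n.+1 -> T -> R).
Hypotheses (nu_gt0 : 0 < nu) (beta_gt0 : 0 < beta) (rho_gt1 : 1 < rho)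
  (n_gt0 : (0 < n)%N) (indep : mutually_independent P Xs)
  (Xs_pareto : forall i, is_pareto P nu beta (Xs i)).

Local Notation F := (pareto_cdf nu beta).
Local Notation X := (Xs ord0).
Local Notation M := (sample_max Xs).
Local Notation pr := (pr P).

Lemma measurable_X_preimage S : measurable S -> measurable (X @^-1` S).
Proof. by move=> mS; rewrite -[_ @^-1` _]setTI; exact: (Xs_pareto _).1. Qed.

Lemma measurable_sample_max : measurable_fun setT M.
Proof.
rewrite /sample_max; elim: (index_enum _) => [|i r IH].
  by under eq_fun do rewrite big_nil; exact: measurable_cst.
under eq_fun do rewrite big_cons.
exact: measurable_realfun.measurable_maxr (Xs_pareto _).1 IH.
Qed.

Lemma measurable_sample_max_le x : measurable [set t | M t <= x].
Proof. exact: measurable_ler measurable_sample_max (measurable_cst x). Qed.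

Lemma pr_preimage_max_le S x : measurable S -> 0 <= x ->
  pr (X @^-1` S `&` [set t | M t <= x]) = pr (X @^-1` S) * F x ^+ n.
Proof.
move=> mS x_ge0; pose B (i : 'I_n.+1) := if i == ord0 then S else [set y : R | y <= x].
have mB i : measurable (B i) by rewrite /B; case: ifP => // _; exact: measurable_le_cst.
have -> : X @^-1` S `&` [set t | M t <= x] =
    \bigcap_(i in [set: 'I_n.+1]) Xs i @^-1` B i.
  apply/seteqP; split => [t [St /bigmax_leP[_ Mx]] i _|t Bt]; rewrite /B.
    by case: (unliftP ord0 i) => [j ->|->]; [exact: Mx|rewrite eqxx].
  split; first by have := Bt ord0 I; rewrite /B eqxx.
  by apply/bigmax_leP; split => // j _; have := Bt (lift ord0 j) I; rewrite /B.
rewrite {1}/pr (indep.2 B mB) big_ord_recl /B eqxx (prE _ (measurable_X_preimage mS)).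
under eq_bigr do rewrite (Xs_pareto _).2.
by rewrite prodEFin prodr_const card_ord -EFinM.
Qed.

Lemma pr_sample_max_le x : 0 <= x -> pr [set t | M t <= x] = F x ^+ n.
Proof.
move=> x_ge0; have := pr_preimage_max_le measurableT x_ge0.
by rewrite preimage_setT setTI => ->; rewrite /pr probability_setT mul1r.
Qed.

Lemma measurable_X_le x : measurable (X @^-1` [set y | y <= x]).
Proof. exact: measurable_X_preimage (measurable_le_cst x). Qed.

Lemma pr_X_le x : pr (X @^-1` [set y | y <= x]) = F x.
Proof. by rewrite /pr (Xs_pareto _).2. Qed.

Lemma pr_X_gt x : pr (X @^-1` [set y | x < y]) = 1 - F x.
Proof.
rewrite -pr_X_le -pr_setC; last exact: measurable_X_le.
by congr pr; apply/seteqP; split => t /=; rewrite ltNge => /negP.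
Qed.

Lemma pr_X_itv x y : x <= y -> pr (X @^-1` [set z | x < z <= y]) = F y - F x.
Proof.
move=> xy; rewrite -[_ @^-1` _]/[set t | x < X t <= y] set_lt_leE.
rewrite -!pr_X_le pr_setD //; try exact: measurable_X_le.
by move=> t /= /le_trans; apply.
Qed.

Lemma measurable_cJ_eq k : measurable [set t | cJ rho Xs t = k].
Proof.
have mJ : measurable_fun setT (Jn rho Xs).
  apply: measurable_realfun.measurable_funM (measurable_cst (ln rho)^-1).
  exact: measurableT_comp (@measurable_realfun.measurable_ln R) measurable_sample_max.
have -> : [set t | cJ rho Xs t = k] =
    [set t | (k - 1)%:~R < Jn rho Xs t] `&` [set t | Jn rho Xs t <= k%:~R].
  apply/seteqP; split => t /=; first by move=> <-; apply/andP; exact: ceil_itv.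
  by case=> lt_J J_le; apply: ceil_def; rewrite lt_J J_le.
by apply: measurableI; [apply: measurable_ltr mJ|apply: measurable_ler mJ _].
Qed.

Lemma measurable_tail_event : measurable (tail_event rho Xs).
Proof.
have -> : tail_event rho Xs = \bigcup_(k : int)
    ([set t | cJ rho Xs t = k] `&` X @^-1` [set y | rho_pow rho k < y]).
  by apply/seteqP; split => [t tail|t [k _ [<-]]] //; exists (cJ rho Xs t).
apply: countable_bigcupT_measurable => [|k]; first exact: countableP.
exact: measurableI (measurable_cJ_eq k) (measurable_X_preimage (measurable_cst_lt _)).
Qed.

Lemma measurable_last_event : measurable (last_event rho Xs).
Proof.
have -> : last_event rho Xs = \bigcup_(k : int) ([set t | cJ rho Xs t = k] `&`
    X @^-1` [set y | rho_pow rho (k - 1) < y <= rho_pow rho k]).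
  apply/seteqP; split => [t last|t [k _ [<-]]].
    by exists (cJ rho Xs t) => //; rewrite /= -powR_intr_sub1.
  by rewrite /last_event /= powR_intr_sub1.
apply: countable_bigcupT_measurable => [|k]; first exact: countableP.
apply: measurableI (measurable_cJ_eq k) _.
exact: measurable_X_preimage (measurable_itvoc_set _ _).
Qed.

(* The grid [rho^(s + j)] starts below [nu], so that [max_below 0] is null. *)
Variable s : int.
Hypothesis rho_pow_s_le : rho_pow rho s <= nu.

Definition grid_cdf (j : nat) := F (rho_pow rho (s + j%:Z)).
Definition max_below (j : nat) := [set t | M t <= rho_pow rho (s + j%:Z)].
Definition max_layer (j : nat) :=
  [set t | rho_pow rho (s + j%:Z) < M t <= rho_pow rho (s + j.+1%:Z)].

Lemma grid_cdf0 : grid_cdf 0 = 0.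
Proof. by rewrite /grid_cdf addr0 pareto_cdf_le_nu. Qed.

Lemma grid_cdf_ge0 j : 0 <= grid_cdf j.
Proof. exact: pareto_cdf_ge0. Qed.

Lemma grid_cdf_in01 j : 0 <= grid_cdf j <= 1.
Proof. by rewrite grid_cdf_ge0 pareto_cdf_le1. Qed.

Lemma grid_cdf_mono j : grid_cdf j <= grid_cdf j.+1.
Proof. by apply/le_pareto_cdf/ler_rho_pow; rewrite ?lerD2l ?lez_nat. Qed.

Lemma add_natS_sub1 (k : int) (j : nat) : k + j.+1%:Z - 1 = k + j%:Z.
Proof. by rewrite intS; ring. Qed.

Lemma grid_cdf_ratio j : 1 - grid_cdf j <= rho `^ beta * (1 - grid_cdf j.+1).
Proof.
by rewrite /grid_cdf -add_natS_sub1 rho_powB1 // pareto_ccdf_div_le ?rho_pow_gt0 // ltW.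
Qed.

Lemma grid_cdf_near1 e : 0 < e -> exists L, n%:R * (1 - grid_cdf L) <= e.
Proof.
move=> e_gt0; have nR_gt0 : 0 < n%:R :> R by rewrite ltr0n.
have [y y_gt0 y_small] := pareto_ccdf_small nu_gt0 beta_gt0 (divr_gt0 e_gt0 nR_gt0).
have [k y_le] := exists_rho_pow_ge rho_gt1 y_gt0.
exists `|k - s|%N; rewrite -ler_pdivlMl // mulrC y_small //.
apply: le_trans y_le (ler_rho_pow rho_gt1 _).
by rewrite abszE -lerBlDl ler_norm.
Qed.

Lemma measurable_max_below j : measurable (max_below j).
Proof. exact: measurable_sample_max_le. Qed.

Lemma pr_max_below j : pr (max_below j) = grid_cdf j ^+ n.
Proof. exact/pr_sample_max_le/ltW/rho_pow_gt0. Qed.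

Lemma pr_max_below0 : pr (max_below 0) = 0.
Proof. by rewrite pr_max_below grid_cdf0 expr0n gtn_eqF. Qed.

Lemma max_layerE j : max_layer j = max_below j.+1 `\` max_below j.
Proof. exact: set_lt_leE. Qed.

Lemma max_below_mono j : max_below j `<=` max_below j.+1.
Proof.
move=> t /= /le_trans; apply; apply: ler_rho_pow => //.
by rewrite lerD2l lez_nat.
Qed.

Lemma pr_max_layer A j : measurable A ->
  pr (A `&` max_layer j) = pr (A `&` max_below j.+1) - pr (A `&` max_below j).
Proof.
move=> mA; rewrite -pr_setD; try exact: measurableI mA (measurable_max_below _).
  congr pr; rewrite max_layerE setIDA.
  apply/seteqP; split=> t [[At B1t] nB0t]; split=> //.
    by case=> _ /nB0t.
  by move=> B0t; apply: nB0t.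
by move=> t [At /max_below_mono].
Qed.

Lemma pr_preimage_max_layer S j : measurable S ->
  pr (X @^-1` S `&` max_layer j) =
  pr (X @^-1` S) * (grid_cdf j.+1 ^+ n - grid_cdf j ^+ n).
Proof.
move=> mS; rewrite pr_max_layer; last exact: measurable_X_preimage.
by rewrite !pr_preimage_max_le ?(ltW (rho_pow_gt0 _ _)) // mulrBr.
Qed.

Lemma pr_max_below_sum E (S : nat -> set R) L : measurable E ->
  (forall j, measurable (S j)) ->
  (forall j, E `&` max_layer j = X @^-1` S j `&` max_layer j) ->
  pr (E `&` max_below L) =
  \sum_(j < L) pr (X @^-1` S j) * (grid_cdf j.+1 ^+ n - grid_cdf j ^+ n).
Proof.
move=> mE mS E_layer; elim: L => [|L IH].
  rewrite big_ord0; apply/eqP; rewrite eq_le pr_ge0 andbT -pr_max_below0.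
  apply: (le_pr P) (measurable_max_below _) (@subIsetr _ _ _).
  exact: measurableI mE (measurable_max_below _).
rewrite big_ord_recr -IH /= -pr_preimage_max_layer // -E_layer pr_max_layer //.
by rewrite addrC subrK.
Qed.

Lemma pr_max_below_bounds E L : measurable E ->
  pr (E `&` max_below L) <= pr E <= pr (E `&` max_below L) + (1 - grid_cdf L ^+ n).
Proof.
move=> mE; have mEL := measurableI _ _ mE (measurable_max_below L).
rewrite (le_pr P mEL mE (@subIsetl _ _ _)) -lerBlDl -pr_setD ?subIsetl //.
rewrite -pr_max_below -pr_setC; last exact: measurable_max_below.
apply: le_pr => [||t [Et nELt] Lt]; last exact: nELt.
- exact: measurableD mE mEL.
- exact/measurableC/measurable_max_below.
Qed.

Lemma cJ_max_layer t j : max_layer j t -> cJ rho Xs t = s + j.+1%:Z.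
Proof.
by move=> layer_t; apply: ceil_log_rho => //; rewrite add_natS_sub1.
Qed.

Lemma pr_tail_below L : pr (tail_event rho Xs `&` max_below L) =
  \sum_(j < L) (1 - grid_cdf j.+1) * (grid_cdf j.+1 ^+ n - grid_cdf j ^+ n).
Proof.
rewrite (@pr_max_below_sum _ (fun j => [set y | rho_pow rho (s + j.+1%:Z) < y])).
- by apply: eq_bigr => j _; rewrite pr_X_gt.
- exact: measurable_tail_event.
- by move=> j; exact: measurable_cst_lt.
move=> j; apply/seteqP; split=> t [Et layer_t]; split=> //;
  by move: Et; rewrite /tail_event /= (cJ_max_layer layer_t).
Qed.

Lemma pr_last_below L : pr (last_event rho Xs `&` max_below L) =
  \sum_(j < L) (grid_cdf j.+1 - grid_cdf j) * (grid_cdf j.+1 ^+ n - grid_cdf j ^+ n).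
Proof.
rewrite (@pr_max_below_sum _
  (fun j => [set y | rho_pow rho (s + j%:Z) < y <= rho_pow rho (s + j.+1%:Z)])).
- apply: eq_bigr => j _; rewrite pr_X_itv //.
  by apply: ler_rho_pow => //; rewrite lerD2l lez_nat.
- exact: measurable_last_event.
- by move=> j; exact: measurable_itvoc_set.
move=> j; apply/seteqP; split=> t [Et layer_t]; split=> //;
  by move: Et; rewrite /last_event /= powR_intr_sub1 (cJ_max_layer layer_t)
       add_natS_sub1.
Qed.

Lemma pr_tail_le L : pr (tail_event rho Xs) <= 1 / n.+1%:R + n%:R * (1 - grid_cdf L).
Proof.
have /andP[_ tail_le] := pr_max_below_bounds L measurable_tail_event.
apply: le_trans tail_le _; rewrite pr_tail_below.
exact: sum_tail_increments_le n_gt0 grid_cdf0 grid_cdf_in01 L.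
Qed.

Lemma pr_tail_ge L :
  rho `^ (- beta) / n.+1%:R <= pr (tail_event rho Xs) + n%:R * (1 - grid_cdf L).
Proof.
have /andP[tail_ge _] := pr_max_below_bounds L measurable_tail_event.
apply: le_trans _ (lerD tail_ge (lexx _)); rewrite pr_tail_below powRN.
exact: sum_tail_increments_ge n_gt0 (powR_ge1 beta_gt0 (ltW rho_gt1))
  grid_cdf0 grid_cdf_in01 grid_cdf_mono grid_cdf_ratio L.
Qed.

Lemma pr_last_le L : pr (last_event rho Xs) <=
  (rho `^ beta - rho `^ (- beta)) / n.+1%:R + n%:R * (1 - grid_cdf L).
Proof.
have /andP[_ last_le] := pr_max_below_bounds L measurable_last_event.
apply: le_trans last_le _; rewrite pr_last_below powRN.
exact: sum_last_increments_le n_gt0 (powR_ge1 beta_gt0 (ltW rho_gt1))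
  grid_cdf0 grid_cdf_in01 grid_cdf_mono grid_cdf_ratio L.
Qed.

Lemma le_grid_limit x y : (forall L, x <= y + n%:R * (1 - grid_cdf L)) -> x <= y.
Proof.
move=> x_le; apply/ler_addgt0Pr => e e_gt0.
have [L L_le] := grid_cdf_near1 e_gt0.
by apply: le_trans (x_le L) _; rewrite lerD2l.
Qed.

End pareto_sample.

Theorem theorem5 (R : realType) (d : measure_display) (T : measurableType d)
  (P : probability T R) (n : nat) (nu beta rho : R)
  (Xs : 'I_n.+1 -> T -> R) :
  0 < nu -> 0 < beta -> 1 < rho -> (1 <= n)%N ->
  mutually_independent P Xs ->
  (forall i, is_pareto P nu beta (Xs i)) ->
  (P (last_event rho Xs)
     <= ((rho `^ beta - rho `^ (- beta)) / (n%:R + 1))%:E)%E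
  /\ (((rho `^ (- beta)) / (n%:R + 1))%:E <= P (tail_event rho Xs))%E
  /\ (P (tail_event rho Xs) <= (1 / (n%:R + 1))%:E)%E.
Proof.
move=> nu_gt0 beta_gt0 rho_gt1 n_gt0 indep Xs_pareto.
have [s rho_pow_s_le] := exists_rho_pow_le rho_gt1 nu_gt0.
have m_last : measurable (last_event rho Xs) by apply: measurable_last_event.
have m_tail : measurable (tail_event rho Xs) by apply: measurable_tail_event.
rewrite (prE P m_last) (prE P m_tail) !lee_fin natr1.
split; [|split]; apply: (le_grid_limit nu_gt0 beta_gt0 rho_gt1 n_gt0 (s := s)) => L.
- by apply: pr_last_le.
- by apply: pr_tail_ge.
- by apply: pr_tail_le.
Qed.
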